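(* Let $n$ be a positive integer. Let $U_n\subseteq T_n$ be the set of triples $(A,B,C)\in T_n$ such that $C$ has at least one point strictly above the horizontal axis and either $B$ ends with a down step or $B$ is empty. Let $D_n^+\subseteq D_n$ be the set of pairs $(H,X)\in D_n$ in which $X$ is strictly above the horizontal axis. Define $s:U_n\to D_n^+$ as follows: for $(A,B,C)\in U_n$, let $K$ be the leftmost point of $C$ of maximal height, let $K$ cut $C$ into a left part $C_1$ and a right part $C_2$, and set $s(A,B,C)=(H,X)$, where $H$ is the concatenation of $C_1$, $A$, $B$, $C_2$ (in this order) and $X$ is the point of $H$ where $A$ ends and $B$ begins. Then $s$ is a bijection from $U_n$ onto $D_n^+$.
   Context: A lattice path here is a finite (possibly empty) sequence of steps, each an up step $(1,1)$ or a down step $(1,-1)$, drawn as a polygonal line from a given starting lattice point; its lattice points are its starting point and the endpoints of its steps; the height of a point is its vertical coordinate. $T_n$ is the set of ordered triples $(A,B,C)$ of lattice paths such that for some nonnegative integers $i,j,k$ with $i+j+k=n$, $A$ has $i$ up and $i$ down steps, $B$ has $j$ up and $j$ down steps, and $C$ has $k$ up and $k$ down steps; each of $A,B,C$ is regarded as drawn starting (and hence ending) on the horizontal axis, and statements about heights of points of $C$ or of $C$ being above/below the axis refer to this drawing. $D_n$ is the set of pairs $(H,X)$ where $H$ is a lattice path with $n$ up steps and $n$ down steps drawn from $(0,0)$ to $(2n,0)$ and $X$ is one of the $2n+1$ lattice points of $H$. Concatenation of paths means drawing them successively, each starting at the endpoint of the preceding one, the first starting at $(0,0)$. *)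

From mathcomp Require Import all_boot all_order all_algebra.
Set Implicit Arguments. Unset Strict Implicit. Unset Printing Implicit Defensive.
Import Order.TTheory GRing.Theory Num.Theory.

(* A lattice path is a sequence of steps: true = up step (1,1),
   false = down step (1,-1).  A path p has size p steps and size p + 1
   lattice points, indexed 0 .. size p (point m is the endpoint of the
   first m steps, point 0 being the starting point). *)
Definition lpath := seq bool.

Definition step (b : bool) : int := if b then 1%R else (-1)%R.

(* height (relative to the starting point, drawn on the axis) of point m *)
Definition hgt (p : lpath) (m : nat) : int := (\sum_(b <- take m p) step b)%R.

Definition balanced (p : lpath) : bool := count id p == count negb p.

Definition upsteps (p : lpath) : nat := count id p.

Definition T (n : nat) : pred (lpath * lpath * lpath) :=
  fun t => let: (A, B, C) := t in
    [&& balanced A, balanced B, balanced C &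
        upsteps A + upsteps B + upsteps C == n].

Definition U (n : nat) : pred (lpath * lpath * lpath) :=
  fun t => let: (A, B, C) := t in
    [&& t \in T n,
        [exists m : 'I_(size C).+1, (0 < hgt C m)%R] &
        (B == [::]) || (last true B == false)].

(* D_n : pairs (H, x) with H having n up and n down steps, x the index
   of one of its 2n+1 points. *)
Definition D (n : nat) : pred (lpath * nat) :=
  fun d => let: (H, x) := d in
    [&& upsteps H == n, count negb H == n & x <= size H].

Definition Dplus (n : nat) : pred (lpath * nat) :=
  fun d => let: (H, x) := d in (d \in D n) && (0 < hgt H x)%R.

Definition maxh (C : lpath) : int :=
  (\big[Num.max/0%R]_(m < (size C).+1) hgt C m)%R.

Definition leftmost_max (C : lpath) : nat :=
  find (fun m => hgt C m == maxh C) (iota 0 (size C).+1).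

Definition s (t : lpath * lpath * lpath) : lpath * nat :=
  let: (A, B, C) := t in
  let k := leftmost_max C in
  (take k C ++ A ++ B ++ drop k C, k + size A).

(* Cutting C at its leftmost highest point K splits it into C1, which stays strictly
   below its final height until its end, and C2, which never rises above its start.
   In H = C1 A B C2 the point X is then at height max C > 0, and (A, B, C) can be read
   back from (H, X): K is the first point of H at the height h of X, and, because B is
   empty or ends with a down step, B ends at the first point from X on after which H
   stays at height at most h.  Conversely, cutting any (H, X) with X above the axis at
   these two points gives a triple of U_n that s sends back to (H, X). *)

From mathcomp Require Import all_boot all_order all_algebra.
From mathcomp Require Import zify ring.
Set Implicit Arguments. Unset Strict Implicit. Unset Printing Implicit Defensive.
Import Order.TTheory GRing.Theory Num.Theory.

Lemma take_cat_drop (T : Type) (p : seq T) i j : i <= j -> take i p ++ drop i (take j p) = take j p.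
Proof. by move=> le_ij; rewrite -{1}(take_takel p le_ij) cat_take_drop. Qed.

Lemma last_drop_take (T : Type) (y : T) (p : seq T) i j : i < j <= size p ->
  last y (drop i (take j p)) = nth y p j.-1.
Proof.
case/andP=> lt_ij le_jp; have j_gt0 : 0 < j := leq_ltn_trans (leq0n i) lt_ij.
have lt_j1p : j.-1 < size p by rewrite prednK.
have le_i : i <= size (take j.-1 p) by rewrite size_takel ?(ltnW lt_j1p) // -ltnS prednK.
by rewrite -(prednK j_gt0) (take_nth y lt_j1p) drop_rcons // last_rcons.
Qed.

Definition tot (p : lpath) : int := (\sum_(b <- p) step b)%R.

Lemma hgtE p m : hgt p m = tot (take m p).
Proof. by []. Qed.

Lemma tot_cat p q : tot (p ++ q) = (tot p + tot q)%R.
Proof. by rewrite /tot big_cat. Qed.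

Lemma tot_count p : tot p = ((upsteps p)%:Z - (count negb p)%:Z)%R.
Proof.
elim: p => [|b p IH]; first by rewrite /tot big_nil.
by rewrite /tot big_cons -/(tot p) IH /upsteps; case: b; rewrite /step /= ?PoszD; ring.
Qed.

Lemma balancedE p : balanced p = (tot p == 0%R).
Proof. by rewrite /balanced tot_count subr_eq0 eqz_nat. Qed.

Lemma hgt0 p : hgt p 0 = 0%R.
Proof. by rewrite hgtE take0 /tot big_nil. Qed.

Lemma hgt_over p m : size p <= m -> hgt p m = tot p.
Proof. by move=> le_pm; rewrite hgtE take_oversize. Qed.

Lemma hgt_size p : hgt p (size p) = tot p.
Proof. exact: hgt_over. Qed.

Lemma hgt_catl p q m : m <= size p -> hgt (p ++ q) m = hgt p m.
Proof. by move=> le_mp; rewrite !hgtE takel_cat. Qed.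

Lemma hgt_catr p q m : hgt (p ++ q) (size p + m) = (tot p + hgt q m)%R.
Proof. by rewrite !hgtE take_cat ltnNge leq_addr /= addKn tot_cat. Qed.

Lemma hgt_take p k m : m <= k -> hgt (take k p) m = hgt p m.
Proof. by move=> le_mk; rewrite !hgtE take_takel. Qed.

Lemma tot_drop_take p i j : i <= j -> tot (drop i (take j p)) = (hgt p j - hgt p i)%R.
Proof.
move=> le_ij; have := congr1 tot (cat_take_drop i (take j p)).
by rewrite tot_cat take_takel // -!hgtE => <-; rewrite addrC addKr.
Qed.

Lemma hgt_drop p i m : hgt (drop i p) m = (hgt p (i + m) - hgt p i)%R.
Proof. by rewrite hgtE take_drop addnC tot_drop_take ?leq_addr. Qed.

Lemma hgtS p m : m < size p -> hgt p m.+1 = (hgt p m + step (nth true p m))%R.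
Proof.
by move=> lt_mp; rewrite !hgtE (take_nth true lt_mp) -cats1 tot_cat /tot big_seq1.
Qed.

Lemma hgtS_le p m : (hgt p m.+1 <= hgt p m + 1)%R.
Proof.
have [lt_mp | le_pm] := ltnP m (size p).
  by rewrite hgtS // lerD2l /step; case: nth.
by rewrite !hgt_over ?(leq_trans le_pm) // lerDl.
Qed.

Lemma hgt_down p m : (hgt p m.+1 < hgt p m)%R ->
  nth true p m = false /\ hgt p m.+1 = (hgt p m - 1)%R.
Proof.
have [lt_mp | le_pm] := ltnP m (size p); last first.
  by rewrite !hgt_over ?(leq_trans le_pm) // ltxx.
by rewrite hgtS //; case: nth; rewrite /step ?gtrDl ?ltr10.
Qed.

Lemma hgt_last_down p : 0 < size p -> last true p = false ->
  hgt p (size p).-1 = (tot p + 1)%R.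
Proof.
case/lastP: p => // p b _; rewrite last_rcons => ->.
rewrite size_rcons -cats1 hgt_catl // hgt_size tot_cat /tot big_seq1 /step.
by rewrite addrK.
Qed.

Definition first_hit (p : lpath) (h : int) : nat :=
  find (fun m => hgt p m == h) (iota 0 (size p).+1).

Lemma first_hit_miss p h j : j < first_hit p h -> hgt p j != h.
Proof.
move=> lt_j; have := before_find 0 lt_j.
rewrite nth_iota ?add0n => [/negbT //|].
by rewrite -(size_iota 0 (size p).+1) (leq_trans lt_j) ?find_size.
Qed.

Lemma first_hit_hit p h m : m <= size p -> hgt p m = h ->
  first_hit p h <= m /\ hgt p (first_hit p h) = h.
Proof.
move=> le_mp hm; split.
  by rewrite leqNgt; apply/negP => /first_hit_miss; rewrite hm eqxx.
have has_h : has (fun m => hgt p m == h) (iota 0 (size p).+1).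
  by apply/hasP; exists m; rewrite ?mem_iota ?hm.
have := nth_find 0 has_h; rewrite has_find size_iota in has_h.
by rewrite nth_iota // => /eqP.
Qed.

Lemma first_hit_eq p h k : k <= size p -> hgt p k = h ->
  (forall j, j < k -> hgt p j != h) -> first_hit p h = k.
Proof.
move=> le_kp hk miss; have [le_fk hf] := first_hit_hit le_kp hk.
apply/eqP; rewrite eqn_leq le_fk leqNgt; apply/negP => /miss.
by rewrite hf eqxx.
Qed.

(* Heights change by one at each step, so [p] cannot climb from 0 to [h] without hitting [h]. *)
Lemma hgt_lt_first_hit p h j : (0 < h)%R -> j < first_hit p h -> (hgt p j < h)%R.
Proof.
move=> h_gt0; elim: j => [|j IH] lt_j; first by rewrite hgt0.
rewrite lt_neqAle first_hit_miss //=.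
by apply: le_trans (hgtS_le p j) _; rewrite lezD1 IH // ltnW.
Qed.

Lemma leftmost_maxE C : leftmost_max C = first_hit C (maxh C).
Proof. by []. Qed.

Lemma maxh_ge C m : (hgt C m <= maxh C)%R.
Proof.
have [le_mC | lt_Cm] := leqP m (size C).
  by rewrite /maxh (le_bigmax _ _ (Ordinal (le_mC : (m < (size C).+1)))).
rewrite hgt_over ?(ltnW lt_Cm) // -hgt_size.
by rewrite /maxh (le_bigmax _ _ (@ord_max (size C))).
Qed.

Lemma maxh_attained C : exists2 m, m <= size C & hgt C m = maxh C.
Proof.
have [i _ max_i] := @arg_maxP _ _ _ (@ord0 (size C)) xpredT
  (fun i : 'I_(size C).+1 => hgt C i) erefl.
exists i; first by rewrite -ltnS.
apply: le_anti; rewrite maxh_ge /=; apply/bigmax_leP; split=> [|j _].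
  by rewrite -(hgt0 C); exact: (max_i ord0).
exact: max_i.
Qed.

(* [settle p h] is the first point from which [p] stays at height at most [h]. *)
Definition settle (p : lpath) (h : int) : nat :=
  \max_(i < (size p).+1 | (h < hgt p i)%R) i.+1.

Lemma settle_leq p h m :
  (forall i, m <= i <= size p -> (hgt p i <= h)%R) -> settle p h <= m.
Proof.
move=> low; apply/bigmax_leqP => i hi; rewrite ltnNge; apply/negP => le_mi.
by move: hi; rewrite ltNge low // le_mi -ltnS ltn_ord.
Qed.

Lemma settle_bound p h i : (tot p <= h)%R -> settle p h <= i -> (hgt p i <= h)%R.
Proof.
move=> tot_le le_si; have [le_ip | lt_pi] := leqP i (size p); last first.
  by rewrite hgt_over // ltnW.
rewrite leNgt; apply/negP => hi.
have := @leq_bigmax_cond _ (fun i : 'I_(size p).+1 => h < hgt p i)%R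
  (fun i : 'I_(size p).+1 => i.+1) (Ordinal (le_ip : (i < (size p).+1))) hi.
by rewrite -/(settle p h) => /leq_trans/(_ le_si); rewrite ltnn.
Qed.

Lemma settle_above p h : 0 < settle p h -> (h < hgt p (settle p h).-1)%R.
Proof.
rewrite /settle; case: (pickP (fun i : 'I_(size p).+1 => h < hgt p i)%R) => [i0 hi0|none].
  rewrite (bigop.bigmax_eq_arg i0 hi0) /=.
  by case: arg_maxnP.
by rewrite big_pred0.
Qed.

Lemma maxn_settle p h x e : x <= e <= size p ->
  (forall i, e <= i <= size p -> (hgt p i <= h)%R) ->
  (x < e -> (h < hgt p e.-1)%R) -> maxn x (settle p h) = e.
Proof.
case/andP=> le_xe le_ep low above; have le_se := settle_leq low.
have [lt_xe | le_ex] := ltnP x e; last first.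
  have eq_xe : x = e by apply/eqP; rewrite eqn_leq le_xe le_ex.
  by rewrite -eq_xe; apply/maxn_idPl; rewrite eq_xe.
have e_gt0 : 0 < e := leq_ltn_trans (leq0n x) lt_xe.
have lt_e1 : e.-1 < (size p).+1 by rewrite ltnS (leq_trans (leq_pred e)).
have := @leq_bigmax_cond _ (fun i : 'I_(size p).+1 => h < hgt p i)%R
  (fun i : 'I_(size p).+1 => i.+1) (Ordinal lt_e1) (above lt_xe).
rewrite /= prednK // -/(settle p h) => le_es.
have -> : settle p h = e by apply/eqP; rewrite eqn_leq le_se le_es.
exact/maxn_idPr/ltnW.
Qed.

Lemma maxn_settle_spec p h x : x <= size p -> hgt p x = h -> (tot p <= h)%R ->
  [/\ x <= maxn x (settle p h) <= size p, hgt p (maxn x (settle p h)) = h,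
      forall i, maxn x (settle p h) <= i -> (hgt p i <= h)%R &
      x < maxn x (settle p h) -> nth true p (maxn x (settle p h)).-1 = false].
Proof.
move=> le_xp hx tot_le; set e := maxn x (settle p h).
have low i : e <= i -> (hgt p i <= h)%R.
  by move=> le_ei; apply: settle_bound (leq_trans (leq_maxr _ _) le_ei).
have le_ep : e <= size p.
  by rewrite geq_max le_xp; apply: settle_leq => i /andP[le_pi _]; rewrite hgt_over.
have le_xe : x <= e := leq_maxl x _.
rewrite le_xe le_ep; have [lt_xe | le_ex] := ltnP x e; last first.
  have eq_ex : e = x by apply/eqP; rewrite eqn_leq le_ex le_xe.
  by split=> //; rewrite eq_ex ?ltnn.
have eq_e : e = settle p h.
  by move: lt_xe; rewrite /e /maxn; case: (ltnP x (settle p h)); rewrite ?ltnn.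
have e_gt0 : 0 < e := leq_ltn_trans (leq0n x) lt_xe.
have above : (h < hgt p e.-1)%R by rewrite eq_e settle_above // -eq_e.
have fall : (hgt p e.-1.+1 < hgt p e.-1)%R by rewrite prednK // (le_lt_trans (low e _)).
have [down he] := hgt_down fall; rewrite prednK // in he.
by split=> //; apply: le_anti; rewrite low //= he lerBrDr lezD1 above.
Qed.

(* The two parts into which the leftmost highest point of [C1 ++ C2] cuts it. *)
Definition peak_split (C1 C2 : lpath) : Prop :=
  (forall j, j < size C1 -> (hgt C1 j < tot C1)%R) /\ (forall m, (hgt C2 m <= 0)%R).

Lemma hgt_peak_le C1 C2 i : peak_split C1 C2 -> (hgt (C1 ++ C2) i <= tot C1)%R.
Proof.
case=> below low; have [le_iC1 | lt_C1i] := leqP i (size C1).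
  rewrite hgt_catl //; move: le_iC1; rewrite leq_eqVlt => /orP[/eqP -> | /below/ltW //].
  by rewrite hgt_size.
by rewrite -(subnKC (ltnW lt_C1i)) hgt_catr gerDl low.
Qed.

Lemma leftmost_max_cat C1 C2 : peak_split C1 C2 -> leftmost_max (C1 ++ C2) = size C1.
Proof.
move=> peak; have top : hgt (C1 ++ C2) (size C1) = tot C1 by rewrite hgt_catl // hgt_size.
have max_eq : maxh (C1 ++ C2) = tot C1.
  have [m _ hm] := maxh_attained (C1 ++ C2).
  by apply: le_anti; rewrite -{1}hm hgt_peak_le //= -top maxh_ge.
rewrite leftmost_maxE max_eq; apply: (first_hit_eq _ top).
  by rewrite size_cat leq_addr.
by move=> j lt_j; rewrite hgt_catl ?(ltnW lt_j) // lt_eqF ?peak.1.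
Qed.

Lemma peak_split_exists C : exists C1 C2, C = C1 ++ C2 /\ peak_split C1 C2.
Proof.
have [m le_mC hm] := maxh_attained C; have [le_km hk] := first_hit_hit le_mC hm.
set k := first_hit C (maxh C) in le_km hk.
exists (take k C), (drop k C); split; first by rewrite cat_take_drop.
split=> [j | i]; last by rewrite hgt_drop hk subr_le0 maxh_ge.
rewrite size_takel ?(leq_trans le_km) // => lt_jk.
by rewrite hgt_take ?(ltnW lt_jk) // -hgtE hk lt_neqAle first_hit_miss ?maxh_ge.
Qed.

Lemma s_cut A B C1 C2 : peak_split C1 C2 ->
  s (A, B, C1 ++ C2) = (C1 ++ A ++ B ++ C2, size C1 + size A).
Proof. by move=> peak; rewrite /s leftmost_max_cat // take_size_cat // drop_size_cat. Qed.

Lemma upsteps_cut C1 A B C2 :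
  upsteps (C1 ++ A ++ B ++ C2) = upsteps A + upsteps B + upsteps (C1 ++ C2).
Proof. by rewrite /upsteps !count_cat; lia. Qed.

Lemma tot_cut C1 A B C2 : tot (C1 ++ A ++ B ++ C2) = (tot A + tot B + tot (C1 ++ C2))%R.
Proof. by rewrite !tot_cat; ring. Qed.

Definition s_inv (d : lpath * nat) : lpath * lpath * lpath :=
  let: (H, x) := d in
  let h := hgt H x in
  let k := first_hit H h in
  let e := maxn x (settle H h) in
  (drop k (take x H), drop x (take e H), take k H ++ drop e H).

Section Cut.

Variables C1 A B C2 : lpath.
Hypotheses (totA : tot A = 0%R) (totB : tot B = 0%R).

Local Notation H := (C1 ++ A ++ B ++ C2).

Lemma hgt_cut_mid i : i <= size B -> hgt H (size C1 + size A + i) = (tot C1 + hgt B i)%R.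
Proof. by move=> le_iB; rewrite -addnA !hgt_catr totA add0r hgt_catl. Qed.

Lemma hgt_cut_x : hgt H (size C1 + size A) = tot C1.
Proof. by rewrite -[size C1 + size A]addn0 hgt_cut_mid // hgt0 addr0. Qed.

Lemma hgt_cut_right m : hgt H (size C1 + size A + size B + m) = (tot C1 + hgt C2 m)%R.
Proof. by rewrite -!addnA !hgt_catr totA totB !add0r. Qed.

Lemma s_inv_cut : peak_split C1 C2 -> (B == [::]) || (last true B == false) ->
  s_inv (H, size C1 + size A) = (A, B, C1 ++ C2).
Proof.
case=> below low endB; rewrite /s_inv hgt_cut_x.
have -> : first_hit H (tot C1) = size C1.
  apply: first_hit_eq; first by rewrite size_cat leq_addr.
    by rewrite hgt_catl // hgt_size.
  by move=> j lt_j; rewrite hgt_catl ?(ltnW lt_j) // lt_eqF ?below.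
have -> : maxn (size C1 + size A) (settle H (tot C1)) = size C1 + size A + size B.
  apply: maxn_settle => [|i /andP[le_i _]|].
  - by rewrite leq_addr !size_cat; lia.
  - by rewrite -(subnKC le_i) hgt_cut_right gerDl low.
  rewrite -{1}[size C1 + size A]addn0 ltn_add2l => B_gt0.
  have -> : (size C1 + size A + size B).-1 = size C1 + size A + (size B).-1 by lia.
  move: endB; rewrite -size_eq0 eqn0Ngt B_gt0 /= => /eqP endB.
  by rewrite hgt_cut_mid ?(leq_pred (size B)) // hgt_last_down // totB add0r ltrDl ltr01.
rewrite catA take_size_cat ?size_cat // drop_size_cat //.
rewrite catA take_size_cat ?size_cat // drop_size_cat ?size_cat //.
by rewrite drop_size_cat ?size_cat // -!catA take_size_cat.
Qed.

End Cut.

Lemma s_in_Dplus n t : t \in U n -> s t \in Dplus n.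
Proof.
case: t => [[A B] C]; have [C1 [C2 [-> peak]]] := peak_split_exists C.
rewrite unfold_in /U unfold_in /T.
case/and3P=> /and4P[bA bB bC /eqP nABC] /existsP[m pos_m] _.
move: bA bB bC; rewrite s_cut // !balancedE => /eqP totA /eqP totB /eqP totC.
have bH : balanced (C1 ++ A ++ B ++ C2) by rewrite balancedE tot_cut totA totB totC.
rewrite unfold_in /Dplus unfold_in /D /= -(eqP bH) -/(upsteps _) upsteps_cut nABC eqxx /=.
rewrite hgt_cut_x // !size_cat leq_add2l leq_addr /=.
by rewrite (lt_le_trans pos_m) // hgt_peak_le.
Qed.

Lemma s_inv_s n t : t \in U n -> s_inv (s t) = t.
Proof.
case: t => [[A B] C]; have [C1 [C2 [-> peak]]] := peak_split_exists C.
rewrite unfold_in /U unfold_in /T.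
case/and3P=> /and4P[bA bB _ _] _ endB.
move: bA bB; rewrite !balancedE => /eqP totA /eqP totB.
by rewrite s_cut // s_inv_cut.
Qed.

Lemma Dplus_cut H x : x <= size H -> tot H = 0%R -> (0 < hgt H x)%R ->
  exists C1 A B C2, [/\ H = C1 ++ A ++ B ++ C2, x = size C1 + size A,
    tot A = 0%R /\ tot B = 0%R, peak_split C1 C2 &
    (B == [::]) || (last true B == false)].
Proof.
move=> le_xH totH; set h := hgt H x => pos_h.
have tot_le : (tot H <= h)%R by rewrite totH ltW.
have [le_kx hk] := first_hit_hit le_xH (erefl h); set k := first_hit H h in le_kx hk.
have le_kH := leq_trans le_kx le_xH.
have [/andP[le_xe le_eH] he low endB] := maxn_settle_spec le_xH (erefl h) tot_le.
set e := maxn x (settle H h) in le_xe le_eH he low endB.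
exists (take k H), (drop k (take x H)), (drop x (take e H)), (drop e H); split.
- by rewrite catA take_cat_drop // catA take_cat_drop // cat_take_drop.
- by rewrite size_takel // size_drop size_takel // subnKC.
- by rewrite !tot_drop_take // -/h hk he subrr.
- split=> [j | i]; last by rewrite hgt_drop he subr_le0 low // leq_addr.
  rewrite size_takel // => lt_jk.
  by rewrite hgt_take ?(ltnW lt_jk) // -hgtE hk hgt_lt_first_hit.
have [lt_xe | le_ex] := ltnP x e; last by rewrite drop_oversize // size_takel.
by rewrite last_drop_take ?lt_xe // endB ?orbT.
Qed.

Lemma s_onto n d : d \in Dplus n -> exists2 t, t \in U n & s t = d.
Proof.
case: d => H x; rewrite unfold_in /Dplus unfold_in /D /=.
case/andP=> /and3P[/eqP upH /eqP downH le_xH] pos_x.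
have totH : tot H = 0%R by rewrite tot_count upH downH subrr.
have [C1 [A [B [C2 [eqH eqx [totA totB] peak endB]]]]] := Dplus_cut le_xH totH pos_x.
exists (A, B, C1 ++ C2); last by rewrite s_cut // eqH eqx.
have totC : tot (C1 ++ C2) = 0%R by move: totH; rewrite eqH tot_cut totA totB !add0r.
move: pos_x; rewrite eqH eqx hgt_cut_x // => pos_C1.
rewrite unfold_in /U unfold_in /T /= !balancedE totA totB totC !eqxx endB /=.
rewrite -upsteps_cut -eqH upH eqxx andbT.
have lt_C1 : size C1 < (size (C1 ++ C2)).+1 by rewrite ltnS size_cat leq_addr.
by apply/existsP; exists (Ordinal lt_C1); rewrite /= hgt_catl // hgt_size.
Qed.

Theorem lemma2 (n : nat) (hn : 0 < n) :
  [/\ {in U n, forall t, s t \in Dplus n},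
      {in U n &, injective s} &
      {in Dplus n, forall d, exists2 t, t \in U n & s t = d}].
Proof.
split; [exact: s_in_Dplus | | exact: s_onto].
by move=> t1 t2 Ut1 Ut2 eq_s; rewrite -(s_inv_s Ut1) eq_s (s_inv_s Ut2).
Qed.
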